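(* Let $G=(V,E)$ be a strongly semiconnected digraph and let $P$ be a principal cycle set of $G$. For each edge $e\in E$ let $w(e)$ be the number of elements of $P$ containing $e$. Then the weights $w(e)$, $e\in E$, are positive integers and make $G$ weight-balanced.
   Context: A digraph $G=(V,E)$ has finite $V$ and $E\subseteq V\times V$ (self-loops allowed). $G$ is strongly semiconnected if, for all $v,w\in V$, the existence of a directed path from $v$ to $w$ implies the existence of one from $w$ to $v$. A cycle is a directed path $v_{i_1},\dots,v_{i_k},v_{i_1}$ with distinct $v_{i_1},\dots,v_{i_k}$ (self-loops are cycles), viewed as a subdigraph. $\mathcal{C}(G)$ is the set of subdigraphs of $G$ that are a single edgeless vertex, a cycle, or a union of pairwise vertex-disjoint cycles. A family generates $G$ if the union of vertex sets is $V$ and of edge sets is $E$. A principal cycle set is a subset of $\mathcal{C}(G)$ generating $G$ of minimum cardinality among such subsets. Weights on edges make $G$ weight-balanced if at each vertex the sum of weights of incoming edges equals the sum of weights of outgoing edges. *)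

From mathcomp Require Import all_boot.
Set Implicit Arguments. Unset Strict Implicit. Unset Printing Implicit Defensive.

(* A digraph G = (V, E): V is the finite type of vertices (all of it),
   E : {set V * V} the edge set (self-loops allowed).
   A subdigraph is represented as a pair (vertex set, edge set). *)
Notation subdigraph V := ({set V} * {set (V * V)})%type.

Section Digraph.
Variables (V : finType) (E : {set V * V}).

Definition erel : rel V := fun x y => (x, y) \in E.

Definition strongly_semiconnected : Prop :=
  forall v w : V, connect erel v w -> connect erel w v.

(* The cycle v_1, ..., v_k, v_1 given by the nonempty duplicate-free
   sequence s = [:: v_1; ...; v_k], with all edges (v_i, v_{i+1}) and
   (v_k, v_1) in E.  Its vertex and edge sets: *)
Definition cyc_vertices (s : seq V) : {set V} := [set x in s].
Definition cyc_edges (s : seq V) : {set V * V} := [set (x, next s x) | x in s].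

Definition is_cycle_seq (s : seq V) : bool :=
  [&& s != [::], uniq s & cycle erel s].

Definition is_cycle (H : subdigraph V) : Prop :=
  exists s, is_cycle_seq s /\ H = (cyc_vertices s, cyc_edges s).

(* H belongs to C(G): a single edgeless vertex, or the union of a nonempty
   family of pairwise vertex-disjoint cycles (a single cycle being the
   case of a one-element family). *)
Definition in_CG (H : subdigraph V) : Prop :=
  (exists v : V, H = ([set v], set0)) \/
  (exists cs : seq (seq V),
      [/\ cs != [::], all is_cycle_seq cs,
          pairwise (fun s t => [disjoint cyc_vertices s & cyc_vertices t]) cs &
          H = (\bigcup_(s <- cs) cyc_vertices s, \bigcup_(s <- cs) cyc_edges s)]).

Definition generates (P : {set subdigraph V}) : Prop :=
  \bigcup_(H in P) H.1 = [set: V] /\ \bigcup_(H in P) H.2 = E.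

Definition principal_cycle_set (P : {set subdigraph V}) : Prop :=
  [/\ (forall H, H \in P -> in_CG H), generates P &
      forall Q : {set subdigraph V},
        (forall H, H \in Q -> in_CG H) -> generates Q -> #|P| <= #|Q| ].

Definition pcs_weight (P : {set subdigraph V}) (e : V * V) : nat :=
  #|[set H in P | e \in H.2]|.

Definition weight_balanced (w : V * V -> nat) : Prop :=
  forall v : V,
    \sum_(e in E | e.2 == v) w e = \sum_(e in E | e.1 == v) w e.

End Digraph.

(* Every member of a principal cycle set is an edgeless vertex or a union of
   vertex-disjoint cycles, so inside it each vertex has in-degree equal to
   out-degree (both are 1 on the cycle through it, 0 otherwise).  Counting the
   pairs (member, edge at v) in two ways, the in-weight and the out-weight of v
   are the sums over the members of these equal degrees.  Positivity is the
   fact that the members cover E. *)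
From mathcomp Require Import all_boot.

Lemma card_setIdE (T : finType) (A : {set T}) (p : pred T) :
  #|[set x in A | p x]| = \sum_(x in A) p x.
Proof.
rewrite -sum1_card big_mkcond [RHS]big_mkcond; apply: eq_bigr => x _.
by rewrite !inE; case: (x \in A); case: (p x).
Qed.

Lemma double_count_incidence (T U : finType) (A : {set T}) (P : {set U})
    (F : U -> {set T}) (p : pred T) :
  (forall H, H \in P -> F H \subset A) ->
  \sum_(x in A | p x) #|[set H in P | x \in F H]| =
  \sum_(H in P) #|[set x in F H | p x]|.
Proof.
move=> sub_FA; under eq_bigr do rewrite card_setIdE.
rewrite exchange_big; apply: eq_bigr => H PH.
rewrite card_setIdE big_mkcondr big_mkcond [RHS]big_mkcond; apply: eq_bigr => x _.
have := subsetP (sub_FA H PH) x.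
by case: (x \in F H) => [/(_ isT) ->|]; case: (p x); case: (x \in A).
Qed.

Lemma mem_bigcup_seq (I : eqType) (T : finType) (r : seq I) (F : I -> {set T}) x :
  (x \in \bigcup_(i <- r) F i) = has (fun i => x \in F i) r.
Proof.
elim: r => [|i r IH]; first by rewrite big_nil inE.
by rewrite big_cons in_setU IH.
Qed.

Section Degrees.
Variables (V : finType) (E : {set V * V}).

Definition in_edges (A : {set V * V}) (v : V) := [set e in A | e.2 == v].
Definition out_edges (A : {set V * V}) (v : V) := [set e in A | e.1 == v].

Lemma in_edges_cycle (s : seq V) v : uniq s ->
  in_edges (cyc_edges s) v = if v \in s then [set (prev s v, v)] else set0.
Proof.
move=> us; apply/setP => -[a b]; rewrite !inE /=.
case: ifP => vs; rewrite inE; last first.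
  by apply/negbTE/andP => -[/imsetP[x xs [_ ->]] /eqP nv]; rewrite -nv mem_next xs in vs.
apply/andP/eqP => [[/imsetP[x xs [-> ->]] /eqP <-]|[-> ->]].
  by rewrite prev_next.
split=> //; apply/imsetP; exists (prev s v); first by rewrite mem_prev.
by rewrite next_prev.
Qed.

Lemma out_edges_cycle (s : seq V) v :
  out_edges (cyc_edges s) v = if v \in s then [set (v, next s v)] else set0.
Proof.
apply/setP => -[a b]; rewrite !inE /=.
case: ifP => vs; rewrite inE; last first.
  by apply/negbTE/andP => -[/imsetP[x xs [-> _]] /eqP xv]; rewrite -xv xs in vs.
apply/andP/eqP => [[/imsetP[x xs [-> ->]] /eqP <-]|[-> ->]] //.
by split=> //; apply/imsetP; exists v.
Qed.

Lemma edges_at_bigcup (cs : seq (seq V)) (p : pred (V * V)) :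
  [set e in \bigcup_(s <- cs) cyc_edges s | p e] =
  \bigcup_(s <- cs) [set e in cyc_edges s | p e].
Proof.
elim: cs => [|s cs IH].
  by rewrite !big_nil; apply/setP => e; rewrite !inE.
by rewrite !big_cons -IH; apply/setP => e; rewrite !inE andb_orl.
Qed.

Lemma mem_disjoint_cycles {cs : seq (seq V)} {s t : seq V} {v : V} :
  pairwise (fun s t => [disjoint cyc_vertices s & cyc_vertices t]) cs ->
  s \in cs -> t \in cs -> v \in s -> v \in t -> s = t.
Proof.
elim: cs => [//|a cs IH] /= /andP[/allP disj_a disj_cs].
have apart x : x \in cs -> v \in a -> v \in x -> False.
  move=> xcs va vx; have := disjointFr (disj_a x xcs) (x := v).
  by rewrite !inE va vx => /(_ isT).
rewrite !inE => /predU1P[->|scs] /predU1P[->|tcs] // vs vt.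
- by case: (apart t).
- by case: (apart s).
- exact: IH.
Qed.

(* At most one of the disjoint cycles passes through [v], so at most one [F s]
   is nonempty. *)
Lemma card_bigcup_cycles_at {T : finType} {cs : seq (seq V)}
    {F : seq V -> {set T}} (f : seq V -> T) (v : V) :
  pairwise (fun s t => [disjoint cyc_vertices s & cyc_vertices t]) cs ->
  (forall s, s \in cs -> F s = if v \in s then [set f s] else set0) ->
  #|\bigcup_(s <- cs) F s| = has (fun s => v \in s) cs.
Proof.
move=> disj_cs defF; case: hasP => [[s0 s0cs vs0]|no_v]; last first.
  rewrite big1_seq ?cards0 // => s /= scs; rewrite defF //.
  by case: ifP => // vs; case: no_v; exists s.
suff -> : \bigcup_(s <- cs) F s = [set f s0] by rewrite cards1.
apply/setP => x; rewrite mem_bigcup_seq; apply/hasP/set1P => [[s scs]|->].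
  rewrite defF //; case: ifP => vs; last by rewrite inE.
  by rewrite (mem_disjoint_cycles disj_cs scs s0cs vs vs0) => /set1P.
by exists s0; rewrite // defF // vs0 set11.
Qed.

Lemma in_CG_balanced (H : subdigraph V) v :
  in_CG E H -> #|in_edges H.2 v| = #|out_edges H.2 v|.
Proof.
case=> [[u ->]|[cs [_ cyc_cs disj_cs ->]]] /=.
  by rewrite /in_edges /out_edges !(eq_card (B := pred0)) // => e; rewrite !inE.
have uniq_cs s : s \in cs -> uniq s by case/(allP cyc_cs)/and3P.
rewrite /in_edges /out_edges !edges_at_bigcup.
rewrite (card_bigcup_cycles_at (fun s => (prev s v, v)) v disj_cs); last first.
  by move=> s scs; apply: in_edges_cycle (uniq_cs s scs).
rewrite (card_bigcup_cycles_at (fun s => (v, next s v)) v disj_cs) //.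
by move=> s scs; apply: out_edges_cycle.
Qed.

End Degrees.

Theorem lemma2p5 (V : finType) (E : {set V * V}) (P : {set subdigraph V}) :
  strongly_semiconnected E ->
  principal_cycle_set E P ->
  (forall e, e \in E -> 0 < pcs_weight P e) /\
  weight_balanced E (pcs_weight P).
Proof.
move=> _ [P_CG [_ cover_E] _].
have sub_E H : H \in P -> H.2 \subset E.
  by move=> PH; rewrite -cover_E (bigcup_max H).
split=> [e|v].
  rewrite -cover_E => /bigcupP[H PH eH].
  by rewrite card_gt0; apply/set0Pn; exists H; rewrite inE PH.
rewrite /pcs_weight !double_count_incidence //.
by apply: eq_bigr => H PH; apply: in_CG_balanced (P_CG H PH).
Qed.
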